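(* Let $r\ge2$ and for $i=1,\ldots,r$ let $\mathcal{A}_i=t_i\,\mathbf a_i\otimes\mathbf b_i\otimes\mathbf c_i\in\mathbb{R}^{m_1\times m_2\times m_3}$ be rank-1 tensors with $t_i\in\mathbb{R}\setminus\{0\}$ and $\|\mathbf a_i\|=\|\mathbf b_i\|=\|\mathbf c_i\|=1$. Then \[\kappa(\mathcal{A}_1,\ldots,\mathcal{A}_r)\ge\max_{1\le i\ne j\le r}\frac{1}{\sqrt{1-|\langle\mathbf c_i,\mathbf c_j\rangle|}}\] (with the right-hand side interpreted as $\infty$ if some $|\langle\mathbf c_i,\mathbf c_j\rangle|=1$).
   Context: $\mathcal{S}$ denotes the manifold of rank-1 tensors in $\mathbb{R}^{m_1\times m_2\times m_3}$. The condition number is $\kappa(\mathcal{A}_1,\ldots,\mathcal{A}_r)=1/\varsigma_{\min}([U_1\ \cdots\ U_r])$, where $U_i$ is a matrix whose columns form an orthonormal basis of the tangent space $T_{\mathcal{A}_i}\mathcal{S}\subset\mathbb{R}^{m_1m_2m_3}$ and $\varsigma_{\min}$ denotes the smallest singular value ($\kappa=\infty$ if it is zero). $\langle\cdot,\cdot\rangle$ is the Euclidean inner product. *)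

From HB Require Import structures.
From mathcomp Require Import all_boot all_order all_algebra.
From mathcomp Require Import mxtens.
From mathcomp Require Import classical_sets reals constructive_ereal ereal.
Set Implicit Arguments. Unset Strict Implicit. Unset Printing Implicit Defensive.
Import Order.TTheory GRing.Theory Num.Theory.
Local Open Scope ring_scope.
Local Open Scope classical_set_scope.

Section Defs.
Variable R : realType.

Definition dotv {n} (u v : 'cV[R]_n) : R := (u^T *m v) 0 0.
Definition normv {n} (u : 'cV[R]_n) : R := Num.sqrt (dotv u u).

(* a (x) b (x) c as a vector of R^(m1*m2*m3) (Kronecker product) *)
Definition tens3 {m1 m2 m3} (a : 'cV[R]_m1) (b : 'cV[R]_m2) (c : 'cV[R]_m3)
  : 'cV[R]_(m1 * m2 * m3) := (a *t b) *t c.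

(* Tangent space of the Segre manifold S at t * a(x)b(x)c (t <> 0):
   { x(x)b(x)c + a(x)y(x)c + a(x)b(x)z }. *)
Definition in_tangent {m1 m2 m3} (a : 'cV[R]_m1) (b : 'cV[R]_m2) (c : 'cV[R]_m3)
  (v : 'cV[R]_(m1 * m2 * m3)) : Prop :=
  exists x y z, v = tens3 x b c + tens3 a y c + tens3 a b z.

Definition is_onb_tangent {m1 m2 m3 d} (a : 'cV[R]_m1) (b : 'cV[R]_m2)
  (c : 'cV[R]_m3) (U : 'M[R]_(m1 * m2 * m3, d)) : Prop :=
  U^T *m U = 1%:M /\
  forall v, (exists w : 'cV[R]_d, v = U *m w) <-> in_tangent a b c v.

(* smallest singular value of an N x n matrix: min_{|x| = 1} |M x|
   (this is the n-th singular value; it is 0 when n > N). *)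
Definition sigma_min {N n} (M : 'M[R]_(N, n)) : R :=
  inf [set normv (M *m x) | x in [set x : 'cV[R]_n | normv x = 1]].

Definition kappa {N n} (M : 'M[R]_(N, n)) : \bar R :=
  if sigma_min M == 0 then +oo%E else ((sigma_min M)^-1)%:E.

Definition inv_sqrt_gap (s : R) : \bar R :=
  if `|s| == 1 then +oo%E else ((Num.sqrt (1 - `|s|))^-1)%:E.

End Defs.

(* The tangent spaces at A_i and A_j contain the unit vectors
   u = a_i(x)b_j(x)c_i and w = a_i(x)b_j(x)c_j, whose inner product is
   s = <c_i, c_j>.  With e = sign s, the vector u - e w = U_i (U_i^T u) -
   U_j (U_j^T e w) is the image under [U_1 ... U_r] of a coefficient vector of
   norm sqrt 2, while |u - e w|^2 = 2 - 2|s|.  Hence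
   sigma_min <= sqrt (1 - |s|), i.e. kappa >= 1 / sqrt (1 - |s|). *)

From HB Require Import structures.
From mathcomp Require Import all_boot all_order all_algebra.
From mathcomp Require Import mxtens.
From mathcomp Require Import classical_sets reals constructive_ereal ereal.
From mathcomp Require Import lra.
Import Order.TTheory GRing.Theory Num.Theory.
Local Open Scope ring_scope.

Section InnerProduct.
Variable R : realType.
Implicit Types n : nat.

Lemma dotvDl n (u v w : 'cV[R]_n) : dotv (u + v) w = dotv u w + dotv v w.
Proof. by rewrite /dotv linearD /= mulmxDl mxE. Qed.

Lemma dotvDr n (u v w : 'cV[R]_n) : dotv w (u + v) = dotv w u + dotv w v.
Proof. by rewrite /dotv mulmxDr mxE. Qed.

Lemma dotvZl n k (u v : 'cV[R]_n) : dotv (k *: u) v = k * dotv u v.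
Proof. by rewrite /dotv linearZ /= -scalemxAl mxE. Qed.

Lemma dotvZr n k (u v : 'cV[R]_n) : dotv u (k *: v) = k * dotv u v.
Proof. by rewrite /dotv -scalemxAr mxE. Qed.

Lemma dotvC n (u v : 'cV[R]_n) : dotv u v = dotv v u.
Proof. by rewrite /dotv -[in LHS](trmxK v) -trmx_mul mxE. Qed.

Lemma dotv_ge0 n (u : 'cV[R]_n) : 0 <= dotv u u.
Proof.
rewrite /dotv mxE; apply: sumr_ge0 => k _.
by rewrite mxE -expr2 sqr_ge0.
Qed.

Lemma normv_eq1 n (u : 'cV[R]_n) : normv u = 1 -> dotv u u = 1.
Proof.
by move=> u1; rewrite -[LHS]sqr_sqrtr ?dotv_ge0 // -/(normv u) u1 expr1n.
Qed.

Lemma normvZ n k (u : 'cV[R]_n) : normv (k *: u) = `|k| * normv u.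
Proof.
by rewrite /normv dotvZl dotvZr mulrA -expr2 sqrtrM ?sqr_ge0 // sqrtr_sqr.
Qed.

Lemma dotv_tens3 m1 m2 m3 (a a' : 'cV[R]_m1) (b b' : 'cV[R]_m2)
  (c c' : 'cV[R]_m3) :
  dotv (tens3 a b c) (tens3 a' b' c') = dotv a a' * dotv b b' * dotv c c'.
Proof.
rewrite /dotv.
have tens11E (A B : 'M[R]_1) : (A *t B) 0 0 = A 0 0 * B 0 0.
  by rewrite mxE !ord1 /=; congr (A _ _ * B _ _); apply: val_inj.
have -> : (tens3 a b c)^T *m tens3 a' b' c' =
    (a^T *m a') *t (b^T *m b') *t (c^T *m c').
  by rewrite /tens3 -!tensmx_mul -!trmx_tens.
by rewrite !tens11E.
Qed.

Lemma dotv_mxcol r (d : 'I_r -> nat) (y z : forall k, 'cV[R]_(d k)) :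
  dotv (\mxcol_k y k) (\mxcol_k z k) = \sum_k dotv (y k) (z k).
Proof. by rewrite /dotv tr_mxcol mul_mxrow_mxcol summxE. Qed.

Lemma dotv_sub_sign n (u w : 'cV[R]_n) (s := dotv u w)
  (e := (-1) ^+ (s < 0)%R : R) :
  dotv u u = 1 -> dotv w w = 1 ->
  dotv (u - e *: w) (u - e *: w) = 2 - 2 * `|s|.
Proof.
move=> uu ww.
rewrite -scaleNr !(dotvDl, dotvDr, dotvZl, dotvZr) uu ww (dotvC _ w) -/s.
by rewrite (normrEsign s) -/e mulr1 mulrNN -expr2 sqrr_sign; lra.
Qed.

End InnerProduct.

Section OrthonormalColumns.
Variables (R : realType) (n d : nat) (U : 'M[R]_(n, d)).
Hypothesis U_onb : U^T *m U = 1%:M.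

Lemma mulmx_onbK (v : 'cV[R]_n) :
  (exists w : 'cV_d, v = U *m w) -> U *m (U^T *m v) = v.
Proof. by case=> w ->; rewrite !mulmxA -(mulmxA U) U_onb mulmx1. Qed.

Lemma dotv_onb_coord (v : 'cV[R]_n) :
  (exists w : 'cV_d, v = U *m w) -> dotv (U^T *m v) (U^T *m v) = dotv v v.
Proof. by move=> hv; rewrite /dotv trmx_mul trmxK -mulmxA mulmx_onbK. Qed.

End OrthonormalColumns.

Lemma sumr_supp2 {V : nmodType} {I : finType} {i j : I} {F : I -> V} :
  i != j -> (forall k, k != i -> k != j -> F k = 0) ->
  \sum_k F k = F i + F j.
Proof.
move=> ij F0; rewrite (bigD1 i) //= (bigD1 j) 1?eq_sym //= big1 ?addr0 //.
by move=> k /andP[ki kj]; apply: F0.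
Qed.

Section BlockRow.
Variables (R : realType) (n r : nat) (d : 'I_r -> nat).
Variable U : forall k, 'M[R]_(n, d k).
Hypothesis U_onb : forall k, (U k)^T *m U k = 1%:M.
Variable z : 'I_r -> 'cV[R]_n.
Hypothesis z_span : forall k, exists y : 'cV_(d k), z k = U k *m y.

Let coords := \mxcol_k ((U k)^T *m z k).

Lemma mxrow_mul_coords : \mxrow_k U k *m coords = \sum_k z k.
Proof.
by rewrite mul_mxrow_mxcol; apply: eq_bigr => k _; rewrite mulmx_onbK.
Qed.

Lemma dotv_coords : dotv coords coords = \sum_k dotv (z k) (z k).
Proof.
by rewrite dotv_mxcol; apply: eq_bigr => k _; rewrite dotv_onb_coord.
Qed.

End BlockRow.

Local Open Scope classical_set_scope.

Section SmallestSingularValue.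
Context {R : realType} {N n : nat} (M : 'M[R]_(N, n)).

Lemma sigma_min_ge0 : 0 <= sigma_min M.
Proof.
rewrite /sigma_min; set S := [set _ | _ in _].
have [->|/set0P neS] := eqVneq S set0; first by rewrite inf0.
by apply: lb_le_inf => // _ [x _ <-]; exact: sqrtr_ge0.
Qed.

Lemma sigma_min_le (x : 'cV[R]_n) :
  normv x = 1 -> sigma_min M <= normv (M *m x).
Proof.
move=> x1; apply: ge_inf; last by exists x.
by exists 0 => _ [y _ <-]; exact: sqrtr_ge0.
Qed.

Lemma sigma_min_le_ratio (x : 'cV[R]_n) :
  0 < normv x -> sigma_min M <= normv (M *m x) / normv x.
Proof.
move=> x_gt0; have := @sigma_min_le ((normv x)^-1 *: x).
rewrite -scalemxAr !normvZ ger0_norm ?invr_ge0 ?(ltW x_gt0) // mulVf ?gt_eqF //.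
by rewrite mulrC; exact.
Qed.

Lemma inv_sqrt_gap_le_kappa (s : R) :
  sigma_min M <= Num.sqrt (1 - `|s|) -> (inv_sqrt_gap s <= kappa M)%E.
Proof.
move=> le_sigma; rewrite /inv_sqrt_gap /kappa.
have [s1|s1] := eqVneq `|s| 1.
  suff -> : sigma_min M = 0 by rewrite eqxx.
  apply/le_anti; rewrite sigma_min_ge0 andbT.
  by move: le_sigma; rewrite s1 subrr sqrtr0.
have [_|sigma_neq0] := eqVneq (sigma_min M) 0; first exact: leey.
have sigma_gt0 : 0 < sigma_min M by rewrite lt_def sigma_min_ge0 andbT.
by rewrite lee_fin lef_pV2 ?posrE // (lt_le_trans sigma_gt0).
Qed.

End SmallestSingularValue.

Lemma sigma_min_mxrow_le (R : realType) n r (d : 'I_r -> nat)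
  (U : forall k, 'M[R]_(n, d k)) (i j : 'I_r) (u w : 'cV[R]_n) :
  (forall k, (U k)^T *m U k = 1%:M) -> i != j ->
  (exists y, u = U i *m y) -> (exists y, w = U j *m y) ->
  dotv u u = 1 -> dotv w w = 1 ->
  sigma_min (\mxrow_k U k) <= Num.sqrt (1 - `|dotv u w|).
Proof.
move=> U_onb ij u_span w_span uu ww.
pose e : R := (-1) ^+ (dotv u w < 0)%R.
pose z k := if k == i then u else if k == j then - e *: w else 0.
have [zi zj] : z i = u /\ z j = - e *: w.
  by rewrite /z eqxx eq_sym (negbTE ij) eqxx.
have z0 k : k != i -> k != j -> z k = 0 by rewrite /z => /negbTE-> /negbTE->.
have z_span k : exists y, z k = U k *m y.
  rewrite /z; case: eqP => [->//|_]; case: eqP => [->|_].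
    by case: w_span => y ->; exists (- e *: y); rewrite scalemxAr.
  by exists 0; rewrite mulmx0.
have sum_z : \sum_k z k = u - e *: w.
  by rewrite (sumr_supp2 ij z0) zi zj scaleNr.
pose coords := \mxcol_k ((U k)^T *m z k).
have normv_coords : normv coords = Num.sqrt 2.
  rewrite /normv dotv_coords // (sumr_supp2 ij) => [|k ki kj]; last first.
    by rewrite z0 // /dotv mulmx0 mxE.
  by rewrite zi zj dotvZl dotvZr uu ww mulr1 mulrNN -expr2 sqrr_sign.
have sqrt2_gt0 : 0 < Num.sqrt (2 : R) by rewrite sqrtr_gt0.
apply: le_trans (sigma_min_le_ratio _ coords _) _; rewrite normv_coords //.
rewrite /normv mxrow_mul_coords // sum_z dotv_sub_sign //.
by rewrite -{1}(mulr1 2) -mulrBr sqrtrM // mulrC mulKf ?gt_eqF.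
Qed.

Theorem lemma3p1 (R : realType) (m1 m2 m3 r : nat) (hr : (2 <= r)%N)
  (t : 'I_r -> R) (a : 'I_r -> 'cV[R]_m1) (b : 'I_r -> 'cV[R]_m2)
  (c : 'I_r -> 'cV[R]_m3)
  (ht : forall i, t i != 0)
  (ha : forall i, normv (a i) = 1) (hb : forall i, normv (b i) = 1)
  (hc : forall i, normv (c i) = 1)
  (d : 'I_r -> nat) (U : forall i : 'I_r, 'M[R]_(m1 * m2 * m3, d i))
  (hU : forall i, is_onb_tangent (a i) (b i) (c i) (U i)) :
  forall i j : 'I_r, i != j ->
    (inv_sqrt_gap (dotv (c i) (c j)) <= kappa (\mxrow_(k < r) U k))%E.
Proof.
move=> i j ij; apply: inv_sqrt_gap_le_kappa.
have -> : dotv (c i) (c j) =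
    dotv (tens3 (a i) (b j) (c i)) (tens3 (a i) (b j) (c j)).
  by rewrite dotv_tens3 !normv_eq1 ?mul1r.
apply: sigma_min_mxrow_le ij _ _ _ _.
- by move=> k; case: (hU k).
- apply/(hU i).2; exists 0, (b j), 0.
  by rewrite /tens3 !tens0mx !tensmx0 add0r addr0.
- apply/(hU j).2; exists (a i), 0, 0.
  by rewrite /tens3 !(tens0mx, tensmx0) !addr0.
- by rewrite dotv_tens3 !normv_eq1 ?mulr1.
- by rewrite dotv_tens3 !normv_eq1 ?mulr1.
Qed.
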